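(* Let $D\subseteq\mathbb{R}^n$ be a closed convex set containing no line, let $a_1,\dots,a_m\in\mathbb{R}^n$ and $-\infty\le b_i^l\le b_i^u\le+\infty$ for $i\in[m]$, and let $\tilde m\le m$ be the dimension of $\operatorname{span}\{a_1,\dots,a_m\}$. Suppose $\mathcal{H}=D\cap\{x\in\mathbb{R}^n: b_i^l\le\langle a_i,x\rangle\le b_i^u\ \forall i\in[m]\}$ is unbounded. Then every extreme ray of the recession cone $\operatorname{rec}(\mathcal{H})$ is contained in a face of $\operatorname{rec}(D)$ of dimension at most $\tilde m+1$.
   Context: For a closed convex set $D$, its recession cone is $\operatorname{rec}(D)=\{d: x+td\in D\ \forall x\in D,\ t\ge0\}$. A face of a closed convex set $D$ is a convex $F\subseteq D$ such that any segment $[a,b]\subseteq D$ with $(a,b)\cap F\neq\emptyset$ lies in $F$; its dimension is that of its affine hull. An extreme ray of a closed pointed convex cone is a face of it which is a half-line emanating from the origin. *)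

From HB Require Import structures.
From mathcomp Require Import all_boot all_order all_algebra.
From mathcomp Require Import all_classical all_reals all_analysis.
Set Implicit Arguments. Unset Strict Implicit. Unset Printing Implicit Defensive.
Import Order.TTheory GRing.Theory Num.Theory.
Import numFieldNormedType.Exports.
Local Open Scope classical_set_scope.
Local Open Scope ring_scope.

Section Defs.
Variables (R : realType) (n : nat).
Implicit Types (D F : set 'rV[R]_n).

Definition is_convex_set D : Prop :=
  forall x y t, D x -> D y -> 0 <= t <= 1 -> D ((1 - t) *: x + t *: y).

Definition contains_no_line D : Prop :=
  ~ exists x d : 'rV[R]_n, d != 0 /\ forall t : R, D (x + t *: d).

Definition rec_cone D : set 'rV[R]_n :=
  [set d | forall x, D x -> forall t : R, 0 <= t -> D (x + t *: d)].

Definition is_face D F : Prop :=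
  is_convex_set F /\ F `<=` D /\
  forall a b : 'rV[R]_n,
    (forall t : R, 0 <= t <= 1 -> D (a + t *: (b - a))) ->
    (exists2 t : R, 0 < t < 1 & F (a + t *: (b - a))) ->
    forall t : R, 0 <= t <= 1 -> F (a + t *: (b - a)).

(* the affine hull of F has dimension at most k: the linear span of the
   differences x - y (x, y in F), i.e. the direction space of aff F, is
   contained in the row space of some k x n matrix *)
Definition aff_dim_le F (k : nat) : Prop :=
  exists B : 'M[R]_(k, n), forall x y, F x -> F y -> (x - y <= B)%MS.

Definition is_extreme_ray (C E : set 'rV[R]_n) : Prop :=
  is_face C E /\
  exists d : 'rV[R]_n, d != 0 /\ E = [set t *: d | t in [set t : R | 0 <= t]].

Definition polyhedral_slice m D (A : 'M[R]_(m, n)) (bl bu : 'I_m -> \bar R)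
  : set 'rV[R]_n :=
  [set x | D x /\ forall i : 'I_m,
     (bl i <= (\sum_(j < n) A i j * x 0 j)%:E)%E /\
     ((\sum_(j < n) A i j * x 0 j)%:E <= bu i)%E].

Definition unbounded_set (H : set 'rV[R]_n) : Prop :=
  ~ exists M : R, forall x, H x -> `|x| <= M.

End Defs.

(* Let d span the extreme ray E of rec H.  The face F of rec D generated by d
   consists of the y in rec D with l d - y in rec D for some l >= 0.  For x, y
   in F there is l >= 0 with l d - (x - y) and l d + (x - y) in rec D; if also
   A (x - y) = 0, these two points have the same image under A as l d, hence lie
   in rec H.  Their midpoint l d lies on the extreme ray E, so both lie on E and
   x - y is parallel to d.  Thus span (F - F) meets ker A inside span d and has
   dimension at most rank A + 1.  Showing d in rec D only needs D closed and
   H nonempty. *)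

From HB Require Import structures.
From mathcomp Require Import all_boot all_order all_algebra.
From mathcomp Require Import all_classical all_reals all_analysis.
From mathcomp Require Import ring.
Set Implicit Arguments. Unset Strict Implicit. Unset Printing Implicit Defensive.
Import Order.TTheory GRing.Theory Num.Theory.
Import numFieldNormedType.Exports.
Local Open Scope classical_set_scope.
Local Open Scope ring_scope.

Lemma subspace_rowspace (R : fieldType) n (S : set 'rV[R]_n) :
  S 0 -> (forall u v, S u -> S v -> S (u + v)) -> (forall c u, S u -> S (c *: u)) ->
  exists M : 'M[R]_n, forall u, S u <-> (u <= M)%MS.
Proof.
move=> S0 SD SZ.
pose P k := `[< exists M : 'M[R]_n, \rank M = k /\ forall w, (w <= M)%MS -> S w >].
have P0 : exists k, P k.
  exists 0%N; apply/asboolP; exists 0; rewrite mxrank0; split=> // w.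
  by rewrite submx0 => /eqP ->.
have Pn k : P k -> (k <= n)%N by move=> /asboolP[M [<- _]]; exact: rank_leq_col.
case: (ex_maxnP P0 Pn) => k /asboolP[M [rkM MS]] maxk.
exists M => u; split=> [Su|]; last exact: MS.
apply/contraT => uM.
have /maxk : P (\rank (M + u))%MS.
  apply/asboolP; exists (M + u)%MS; split=> // w /sub_addsmxP[[x y] ->] /=.
  apply: SD; first by apply: MS; apply: submxMl.
  by have /sub_rVP[c ->] := submxMl y u; apply: SZ.
have : (M < M + u)%MS by rewrite ltmxE addsmxSl addsmx_sub negb_and uM orbT.
by rewrite ltmxErank -rkM => /andP[_ /leq_trans] h /h; rewrite ltnn.
Qed.

Lemma mxrank_le_kermx (R : fieldType) m n p q (M : 'M[R]_(m, n)) (B : 'M[R]_(n, p))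
    (N : 'M[R]_(q, n)) :
  (forall w : 'rV_n, (w <= M)%MS -> w *m B = 0 -> (w <= N)%MS) ->
  (\rank M <= \rank B + \rank N)%N.
Proof.
move=> kerMN; rewrite -(mxrank_mul_ker M B) leq_add ?mxrankM_maxr //.
apply: mxrankS; apply/row_subP => i.
have /[!sub_capmx] /andP[iM /sub_kermxP iB] := row_sub i (M :&: kermx B)%MS.
exact: kerMN.
Qed.

Lemma submx_rows_of_rank (R : fieldType) m n k (M : 'M[R]_(m, n)) :
  (\rank M <= k)%N -> exists B : 'M[R]_(k, n), (M <= B)%MS.
Proof.
move=> rkM; exists (castmx (subnKC rkM, erefl n) (col_mx (row_base M) 0)).
by rewrite eqmx_cast -addsmxE (submx_trans _ (addsmxSl _ _)) ?eq_row_base.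
Qed.

Section Cones.
Variables (R : realType) (n : nat).
Implicit Types (C D K F : set 'rV[R]_n) (a b c d w x y z : 'rV[R]_n).

Definition is_cone C := [/\ C 0, forall u v, C u -> C v -> C (u + v)
  & forall (t : R) u, 0 <= t -> C u -> C (t *: u)].

Definition ray d := [set t *: d | t in [set t : R | 0 <= t]].

Lemma ray_self d : ray d d.
Proof. by rewrite /ray /image /=; exists 1; rewrite ?scale1r. Qed.

Lemma segmentE a b (t : R) : a + t *: (b - a) = (1 - t) *: a + t *: b.
Proof. by rewrite scalerBr scalerBl scale1r addrCA addrC. Qed.

Lemma cone_convex C : is_cone C -> is_convex_set C.
Proof.
by case=> _ CD CZ x y t Cx Cy /andP[t0 t1]; apply: CD; apply: CZ; rewrite ?subr_ge0.
Qed.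

Lemma rec_cone_is_cone D : is_cone (rec_cone D).
Proof.
apply: And3 => [x Dx t _|u v Cu Cv x Dx t t0|s u s0 Cu x Dx t t0].
- by rewrite scaler0 addr0.
- by rewrite scalerDr addrA; apply: Cv => //; apply: Cu.
- by rewrite scalerA; apply: Cu => //; rewrite mulr_ge0.
Qed.

Lemma face_sym_mem K F c w : is_convex_set K -> is_face K F ->
  K (c - w) -> K (c + w) -> F c -> F (c + w).
Proof.
move=> convK [_ [_ faceF]] Km Kp Fc.
have seg t : 0 <= t <= 1 -> K (c - w + t *: (c + w - (c - w))).
  by move=> t01; rewrite segmentE; exact: convK.
have mid : exists2 t : R, 0 < t < 1 & F (c - w + t *: (c + w - (c - w))).
  exists 2^-1; first by rewrite invr_gt0 ltr0n invf_lt1 ?ltr0n ?ltr1n.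
  by rewrite (_ : _ + _ = c) //; apply/rowP => j; rewrite !mxE; field.
have := faceF _ _ seg mid 1; rewrite scale1r addrC subrK; apply.
by rewrite ler01 lexx.
Qed.

Section GeneratedFace.
Variables (C : set 'rV[R]_n) (d : 'rV[R]_n).
Hypothesis coneC : is_cone C.

Definition generated_face := [set y | C y /\ exists2 l, 0 <= l & C (l *: d - y)].

Lemma generated_face_cone : is_cone generated_face.
Proof.
case: coneC => C0 CD CZ; apply: And3.
- by split=> //; exists 0; rewrite ?scale0r ?subr0.
- move=> u v [Cu [lu lu0 hu]] [Cv [lv lv0 hv]]; split; first exact: CD.
  exists (lu + lv); first exact: addr_ge0.
  by rewrite scalerDl opprD addrACA; apply: CD.
- move=> t u t0 [Cu [l l0 hu]]; split; first exact: CZ.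
  by exists (t * l); rewrite ?mulr_ge0 // -scalerA -scalerBr; apply: CZ.
Qed.

Lemma generated_face_summand y z :
  C y -> C z -> generated_face (y + z) -> generated_face y.
Proof.
case: coneC => _ CD _ Cy Cz [_ [l l0 h]]; split=> //; exists l => //.
have -> : l *: d - y = l *: d - (y + z) + z by rewrite opprD addrA subrK.
exact: CD.
Qed.

Lemma is_face_generated_face : is_face C generated_face.
Proof.
have [_ _ FZ] := generated_face_cone; have convF := cone_convex generated_face_cone.
case: coneC => _ _ CZ; split=> //; split=> [y [] //|a b seg].
case=> t0 /andP[t0_gt0 t0_lt1]; rewrite segmentE => Fp.
have [t0_ge0 t0_le1] := (ltW t0_gt0, ltW t0_lt1).
have Ca : C a by have := seg 0; rewrite scale0r addr0; apply; rewrite lexx ler01.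
have Cb : C b by have := seg 1; rewrite scale1r addrC subrK; apply; rewrite lexx ler01.
have unscale u s : 0 < s -> generated_face (s *: u) -> generated_face u.
  move=> s0 Fsu; rewrite -(scalerK (lt0r_neq0 s0) u).
  by apply: FZ => //; rewrite invr_ge0 ltW.
have Fa : generated_face a.
  apply: (unscale _ (1 - t0)); first by rewrite subr_gt0.
  by apply: generated_face_summand Fp; apply: CZ; rewrite ?subr_ge0.
have Fb : generated_face b.
  apply: (unscale _ t0) => //; rewrite addrC in Fp.
  by apply: generated_face_summand Fp; apply: CZ; rewrite ?subr_ge0.
by move=> t t01; rewrite segmentE; exact: convF.
Qed.

Hypothesis Cd : C d.

Lemma ray_sub_generated_face : ray d `<=` generated_face.
Proof.
case: coneC => C0 _ CZ _ [t t0 <-].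
by split; [exact: CZ | exists t; rewrite ?subrr].
Qed.

Lemma generated_face_diff x y : generated_face x -> generated_face y ->
  exists2 l, 0 <= l & C (l *: d - (x - y)) /\ C (l *: d + (x - y)).
Proof.
case: coneC => _ CD CZ [Cx [lx lx0 hx]] [Cy [ly ly0 hy]].
exists (lx + ly); first exact: addr_ge0.
split.
- rewrite (_ : (lx + ly) *: d - (x - y) = (lx *: d - x) + y + ly *: d).
    by apply: (CD); [apply: CD | apply: CZ].
  by apply/rowP => j; rewrite !mxE; ring.
- rewrite (_ : (lx + ly) *: d + (x - y) = x + (ly *: d - y) + lx *: d).
    by apply: (CD); [apply: CD | apply: CZ].
  by apply/rowP => j; rewrite !mxE; ring.
Qed.

End GeneratedFace.

Lemma cone_aff_dim_le F p q (B : 'M[R]_(n, p)) (N : 'M[R]_(q, n)) k :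
  is_cone F -> (forall x y, F x -> F y -> (x - y) *m B = 0 -> (x - y <= N)%MS) ->
  (\rank B + \rank N <= k)%N -> aff_dim_le F k.
Proof.
case=> F0 FD FZ kerN rk.
pose S w := exists x y, [/\ F x, F y & w = x - y].
have [M SM] : exists M : 'M[R]_n, forall w, S w <-> (w <= M)%MS.
  apply: subspace_rowspace.
  - by exists 0, 0; rewrite subr0.
  - move=> _ _ [x1 [y1 [Fx1 Fy1 ->]]] [x2 [y2 [Fx2 Fy2 ->]]].
    exists (x1 + x2), (y1 + y2).
    by split; [exact: FD | exact: FD | rewrite opprD addrACA].
  - move=> c _ [x [y [Fx Fy ->]]]; have [c0|c0] := lerP 0 c.
      by exists (c *: x), (c *: y); split; [exact: FZ | exact: FZ | rewrite scalerBr].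
    have c0' : 0 <= - c by rewrite oppr_ge0 ltW.
    exists (- c *: y), (- c *: x).
    by split; [exact: FZ | exact: FZ | rewrite -scalerBr scaleNr -scalerN opprB].
have kerM w : (w <= M)%MS -> w *m B = 0 -> (w <= N)%MS.
  by move=> /SM[x [y [Fx Fy ->]]]; exact: kerN.
have [B' MB'] := submx_rows_of_rank (leq_trans (mxrank_le_kermx kerM) rk).
by exists B' => x y Fx Fy; apply: submx_trans MB'; apply/SM; exists x, y.
Qed.

Lemma rec_cone_of_halfline D x0 d : closed D -> is_convex_set D -> D x0 ->
  (forall s, 0 <= s -> D (x0 + s *: d)) -> rec_cone D d.
Proof.
move=> cD convD Dx0 halfline y Dy t t0.
pose u k := y + t *: d + harmonic k *: (x0 - y).
apply: (@closed_cvg nat _ \oo _ u D cD).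
  apply: nearW => k.
  have hk0 : 0 < @harmonic R k by apply: harmonic_gt0.
  have hk1 : @harmonic R k <= 1 by rewrite /= invf_le1 ?ler1n ?ltr0n.
  have := convD y (x0 + (t / harmonic k) *: d) (harmonic k) Dy (halfline _ _).
  have -> : (1 - harmonic k) *: y + harmonic k *: (x0 + (t / harmonic k) *: d) = u k.
    by apply/rowP => j; rewrite !mxE; field; rewrite gt_eqF.
  by apply; [rewrite divr_ge0 // ltW | rewrite ltW].
have -> : u = cst (y + t *: d) + (fun k => harmonic k *: (x0 - y)) by [].
have := cvgD (cvg_cst (y + t *: d)) (cvgZr_tmp (a := x0 - y) (@cvg_harmonic R)).
by rewrite scale0r addr0; apply; apply: nat_filter.
Qed.

Section Slice.
Variables (m : nat) (D : set 'rV[R]_n) (A : 'M[R]_(m, n)) (bl bu : 'I_m -> \bar R).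
Local Notation H := (polyhedral_slice D A bl bu).

Lemma slice_formE i x : \sum_(j < n) A i j * x 0 j = (x *m A^T) 0 i.
Proof. by rewrite !mxE; apply: eq_bigr => j _; rewrite !mxE mulrC. Qed.

Lemma rec_cone_slice d w l : rec_cone H d -> rec_cone D w -> 0 <= l ->
  w *m A^T = l *: (d *m A^T) -> rec_cone H w.
Proof.
move=> dH wD l0 wA x Hx t t0; split; first by apply: wD; case: Hx.
have sameA : (x + t *: w) *m A^T = (x + (t * l) *: d) *m A^T.
  by rewrite !mulmxDl -!scalemxAl wA scalerA.
move=> i; rewrite slice_formE sameA -slice_formE.
by case: (dH x Hx (t * l) (mulr_ge0 t0 l0)) => _ /(_ i).
Qed.

Lemma ray_face_kernel_submx d w l :
  is_face (rec_cone H) (ray d) -> rec_cone H d -> 0 <= l ->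
  rec_cone D (l *: d - w) -> rec_cone D (l *: d + w) -> w *m A^T = 0 ->
  (w <= d)%MS.
Proof.
move=> faceE dH l0 Dm Dp wA.
have Hm : rec_cone H (l *: d - w).
  by apply: rec_cone_slice dH Dm l0 _; rewrite mulmxBl wA subr0 scalemxAl.
have Hp : rec_cone H (l *: d + w).
  by apply: rec_cone_slice dH Dp l0 _; rewrite mulmxDl wA addr0 scalemxAl.
have [s _ sd] : ray d (l *: d + w).
  by apply: face_sym_mem (cone_convex (rec_cone_is_cone H)) faceE Hm Hp _; exists l.
by apply/sub_rVP; exists (s - l); rewrite scalerBl sd [l *: d + w]addrC addrK.
Qed.

End Slice.

End Cones.

Theorem lemma2 (R : realType) (n m : nat) (D : set 'rV[R]_n)
  (A : 'M[R]_(m, n)) (bl bu : 'I_m -> \bar R) :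
  closed D -> is_convex_set D -> contains_no_line D ->
  (forall i, (bl i <= bu i)%E) ->
  unbounded_set (polyhedral_slice D A bl bu) ->
  forall E : set 'rV[R]_n,
    is_extreme_ray (rec_cone (polyhedral_slice D A bl bu)) E ->
    exists F : set 'rV[R]_n,
      is_face (rec_cone D) F /\ E `<=` F /\ aff_dim_le F (\rank A).+1.
Proof.
move=> cD convD _ _ unbH E [faceE [d [_ E_ray]]]; subst E.
set H := polyhedral_slice D A bl bu.
have [x0 Hx0] : exists x0, H x0.
  by apply: contrapT => noH; apply: unbH; exists 0 => x Hx; case: noH; exists x.
have dH : rec_cone H d by apply: faceE.2.1; exact: ray_self.
have dD : rec_cone D d.
  by apply: rec_cone_of_halfline cD convD Hx0.1 _ => s s0; case: (dH x0 Hx0 s s0).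
have coneD := rec_cone_is_cone D.
exists (generated_face (rec_cone D) d); split; first exact: is_face_generated_face.
split; first exact: ray_sub_generated_face.
apply: (cone_aff_dim_le (B := A^T) (N := d)); first exact: generated_face_cone.
  move=> x y Fx Fy xyA; have [l l0 [Dm Dp]] := generated_face_diff coneD dD Fx Fy.
  exact: ray_face_kernel_submx faceE dH l0 Dm Dp xyA.
by rewrite mxrank_tr -[(\rank A).+1]addn1 leq_add2l rank_leq_row.
Qed.
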